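(* Let $G$ be a graph with no proper 1-join, let $u$ be a 1-cutset of $G$, let $C$ be a connected component of $G\setminus\{u\}$, and let $\overline{C}=C\cup\{u\}$ (as an induced subgraph of $G$). Then $\overline{C}$ has no proper 1-join.
   Context: All graphs are finite and simple. A connected graph $G$ has a 1-cutset $u$ if $G\setminus\{u\}$ has at least two connected components. A 1-join of $G$ is a partition of $V(G)$ into sets $X,Y$ with $|X|,|Y|\ge2$ such that there exist nonempty $A\subseteq X$ and $B\subseteq Y$ with $A$ complete to $B$ (all edges present), $X$ anticomplete to $Y\setminus B$ (no edges), and $Y$ anticomplete to $X\setminus A$; it is denoted $(X,Y,A,B)$. A 1-join $(X,Y,A,B)$ is proper if $A$ and $B$ are stable sets of size at least 2. *)

(* A finite simple graph is a symmetric irreflexive relation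
   [e] on a finite type [T]; an induced subgraph is given by a vertex set. *)
From mathcomp Require Import all_boot.
Set Implicit Arguments.
Unset Strict Implicit.
Unset Printing Implicit Defensive.

Section Graphs.
Variable T : finType.
Variable e : rel T.

Definition simple_graph : Prop := symmetric e /\ irreflexive e.

Definition induced_rel (S : {set T}) : rel T :=
  fun a b => [&& a \in S, b \in S & e a b].

Definition connected_graph : Prop :=
  forall x y : T, connect e x y.

Definition is_component (S C : {set T}) : Prop :=
  exists2 x, x \in S & C = [set y | y \in S & connect (induced_rel S) x y].

Definition one_cutset (u : T) : Prop :=
  connected_graph /\
  exists C1 C2 : {set T}, [/\ is_component (~: [set u]) C1,
                             is_component (~: [set u]) C2 & C1 != C2].

Definition complete_to (A B : {set T}) : Prop :=
  forall a b, a \in A -> b \in B -> e a b.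

Definition anticomplete_to (A B : {set T}) : Prop :=
  forall a b, a \in A -> b \in B -> ~~ e a b.

Definition stable (A : {set T}) : Prop :=
  forall a b, a \in A -> b \in A -> ~~ e a b.

Definition one_join (V X Y A B : {set T}) : Prop :=
  [/\ [/\ X :|: Y = V, X :&: Y = set0, 2 <= #|X| & 2 <= #|Y|],
      [/\ A \subset X, B \subset Y, A != set0 & B != set0],
      complete_to A B,
      anticomplete_to X (Y :\: B) &
      anticomplete_to Y (X :\: A)].

Definition proper_one_join (V X Y A B : {set T}) : Prop :=
  [/\ one_join V X Y A B, stable A, stable B, 2 <= #|A| & 2 <= #|B|].

Definition has_proper_one_join (V : {set T}) : Prop :=
  exists X Y A B, proper_one_join V X Y A B.

End Graphs.

From mathcomp Require Import all_boot.

(* A component C of G \ u sends no edge outside u |: C.  Given a proper 1-join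
   (X, Y, A, B) of G[u |: C], say with u in X, the side Y lies inside C, so the
   vertices outside u |: C can all be added to X: this yields a proper 1-join
   of G itself. *)

Set Implicit Arguments.
Unset Strict Implicit.
Unset Printing Implicit Defensive.

Lemma component_anticomplete (T : finType) (e : rel T) (S C : {set T}) :
  is_component e S C -> anticomplete_to e C (S :\: C).
Proof.
case=> x xS -> c r; rewrite !inE => /andP[cS xc] /andP[rNC rS].
apply/negP=> ecr; move: rNC; rewrite rS /= => /negP; apply.
by apply: connect_trans xc (connect1 _); rewrite /induced_rel cS rS.
Qed.

Lemma anticomplete_toS (T : finType) (e : rel T) (A A' B B' : {set T}) :
  A' \subset A -> B' \subset B -> anticomplete_to e A B ->
  anticomplete_to e A' B'.
Proof.
by move=> /subsetP sA /subsetP sB acAB a b /sA aA /sB bB; apply: acAB.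
Qed.

Section ProperOneJoin.

Variables (T : finType) (e : rel T).
Hypothesis sym_e : symmetric e.

Lemma proper_one_joinC (V X Y A B : {set T}) :
  proper_one_join e V X Y A B -> proper_one_join e V Y X B A.
Proof.
case=> [[[XY XI cX cY] [sA sB nA nB] cAB acX acY] stA stB cA cB].
split=> //; split=> //; first by rewrite setUC setIC.
by move=> b a bB aA; rewrite sym_e; apply: cAB.
Qed.

Lemma proper_one_join_widen (V W X Y A B : {set T}) :
  V \subset W -> anticomplete_to e Y (W :\: V) ->
  proper_one_join e V X Y A B ->
  proper_one_join e W (X :|: (W :\: V)) Y A B.
Proof.
move=> sVW acYW [[[XY XI cX cY] [sA sB nA nB] cAB acX acY] stA stB cA cB].
have /subsetP sYV : Y \subset V by rewrite -XY subsetUr.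
split=> //; split=> //.
- split=> //; first by rewrite setUAC XY -{1}(setIidPr sVW) setID.
    apply/setP=> y; rewrite !inE; case Yy: (y \in Y); rewrite ?andbF //.
    rewrite andbT sYV //= orbF.
    by apply/negbTE/negP=> Xy; move/setP/(_ y): XI; rewrite !inE Xy Yy.
  by apply: leq_trans cX (subset_leq_card (subsetUl _ _)).
- by split=> //; apply: subset_trans sA (subsetUl _ _).
- move=> a b; rewrite inE => /orP[Xa|WVa] YBb; first exact: acX.
  by rewrite sym_e; apply: acYW WVa; move: YBb; rewrite inE => /andP[].
- move=> b a Yb; rewrite !inE => /andP[Aa /orP[Xa|WVa]].
    by apply: acY; rewrite ?inE ?Aa.
  by apply: acYW; rewrite ?inE.
Qed.

End ProperOneJoin.

Theorem mainTheorem8 (T : finType) (e : rel T) (u : T) (C : {set T}) :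
  simple_graph e ->
  ~ has_proper_one_join e [set: T] ->
  one_cutset e u ->
  is_component e (~: [set u]) C ->
  ~ has_proper_one_join e (u |: C).
Proof.
move=> [sym_e _] noG _ compC [X [Y [A [B pjC]]]].
wlog uNY : X Y A B pjC / u \notin Y.
  move=> wlog_uNY; have [uY|] := boolP (u \in Y); last exact: wlog_uNY pjC.
  apply: wlog_uNY (proper_one_joinC sym_e pjC) _.
  have [[[_ XI _ _] _ _ _ _] _ _ _ _] := pjC.
  by apply/negP=> uX; move/setP/(_ u): XI; rewrite !inE uX uY.
have [[[XY _ _ _] _ _ _ _] _ _ _ _] := pjC.
have YC : Y \subset C.
  apply/subsetP=> y Yy; have : y \in u |: C by rewrite -XY inE Yy orbT.
  by rewrite !inE => /orP[/eqP yu|//]; move: uNY; rewrite -yu Yy.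
apply: noG; exists (X :|: ([set: T] :\: (u |: C))), Y, A, B.
apply: (proper_one_join_widen sym_e (subsetT _) _ pjC).
apply: anticomplete_toS YC _ (component_anticomplete compC).
by apply/subsetP=> x; rewrite !inE andbT negb_or andbC.
Qed.
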